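(* Consider the deadline-constrained data aggregation model described in the context, with sink deadline $D$ (a positive integer) and all sensor nodes being sources. Then the maximum value of $QoA$ achievable in an optimal aggregation tree is $2^D-1$, and the maximum value of $QoA$ achievable in the worst-case aggregation tree is $D$.
   Context: A wireless sensor network is a connected graph $\mathcal{G}=(\mathcal{V}\cup\{S\},\xi)$, where $S$ is the sink and $\mathcal{V}$ is the set of sensor nodes. Time is slotted, every transmission takes one slot, and the interference model is one-hop: two transmissions toward the same receiver in the same slot collide. Data aggregation is performed on a spanning tree $\psi$ of $\mathcal{G}$ rooted at $S$ (an aggregation tree). A schedule assigns to each participating sensor node $i$ a waiting time $W_i\in\{0,1,\dots,D-1\}$ (node $i$ transmits its aggregated data to its parent in slot $W_i$), and $W_S=D$. A schedule is feasible if, for every node $i$ (including $S$), the participating children of $i$ have pairwise distinct waiting times, all strictly smaller than $W_i$. Let $n_i=1$ if node $i$ participates and $n_i=0$ otherwise, and let $H^\psi(i)$ be the set consisting of $i$ and all its ancestors in $\psi$ other than $S$. With $F_i=1$ if $i$ is a source node and $F_i=0$ otherwise, the quality of aggregation is $QoA=\sum_{i\in\mathcal{V}}F_i\prod_{j\in H^\psi(i)}n_j$, the number of source nodes whose whole path to the sink participates. The maximum $QoA$ of a tree $\psi$ is the maximum of $QoA$ over all feasible schedules on $\psi$. ''Optimal tree'' and ''worst-case tree'' refer to the aggregation trees with the largest and smallest maximum $QoA$, respectively (the worst case being a chain rooted at the sink). *)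

From mathcomp Require Import all_boot.
Set Implicit Arguments. Unset Strict Implicit. Unset Printing Implicit Defensive.

Section WSN.
Variable T : finType.  (* node set V ∪ {S} *)
Variable s : T.

Definition connected_graph (e : rel T) : Prop :=
  symmetric e /\ irreflexive e /\ forall v, connect e s v.

(* A spanning tree of (T,e) rooted at s, given by its parent function:
   every non-sink node's parent is a neighbour, and following parents from
   any node reaches the sink (hence no cycles). *)
Definition spanning_tree (e : rel T) (par : {ffun T -> T}) : bool :=
  [&& par s == s,
      [forall v, (v != s) ==> e v (par v)] &
      [forall v, [exists k : 'I_#|T|.+1, iter k par v == s]]].

Definition anc (par : {ffun T -> T}) (i j : T) : bool :=
  [exists k : 'I_#|T|.+1, iter k par i == j].

(* feasible schedule: n = participation, W = waiting times (in {0..D-1}),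
   with W_S = D. *)
Definition Wrecv (D : nat) (W : {ffun T -> 'I_D}) (i : T) : nat :=
  if i == s then D else W i.

Definition feasible (D : nat) (par : {ffun T -> T})
    (n : {ffun T -> bool}) (W : {ffun T -> 'I_D}) : bool :=
  [forall j, ((j != s) && n j && ((par j == s) || n (par j))) ==>
               (W j < Wrecv W (par j))] &&
  [forall j, forall k,
     [&& j != s, k != s, j != k, n j, n k, par j == par k &
         ((par j == s) || n (par j))] ==> (W j != W k)].

(* QoA with all sensor nodes being sources (F_i = 1 for all i ∈ V):
   number of sensors whose whole path to the sink (excluding S) participates *)
Definition QoA (par : {ffun T -> T}) (n : {ffun T -> bool}) : nat :=
  #|[set i | (i != s) && [forall j, (anc par i j && (j != s)) ==> n j]]|.

Definition maxQoA (D : nat) (par : {ffun T -> T}) : nat :=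
  \max_(nW : {ffun T -> bool} * {ffun T -> 'I_D} | feasible par nW.1 nW.2)
     QoA par nW.1.

Definition optQoA (D : nat) (e : rel T) : nat :=
  \max_(par : {ffun T -> T} | spanning_tree e par) maxQoA D par.

(* chain rooted at the sink: every node has at most one child *)
Definition is_chain (par : {ffun T -> T}) : Prop :=
  forall u v, u != s -> v != s -> par u = par v -> u = v.

End WSN.

From mathcomp Require Import all_boot zify.
Set Implicit Arguments. Unset Strict Implicit. Unset Printing Implicit Defensive.

(* Call a node covered when its whole path to the sink participates.  In a
   feasible schedule the covered children of the sink or of a covered node x
   have pairwise distinct waiting times, all smaller than that of x.  By
   induction on the waiting time w, a node waiting w slots has at most
   2^0 + ... + 2^(w-1) = 2^w - 1 covered descendants, and at most w of them
   when every node has at most one child; the sink waits D slots.  Both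
   bounds are attained on complete graphs with all nodes participating: by
   the binomial tree on the subsets of {0, ..., D-1}, where the parent of a
   subset drops its least element and that element is its waiting time, and
   by the path of length D with waiting times D-1, ..., 0. *)

Lemma card_bigcup_leq (I T : finType) (P : {pred I}) (F : I -> {set T}) :
  #|\bigcup_(i in P) F i| <= \sum_(i in P) #|F i|.
Proof.
elim/big_rec2: _ => [|i m A _ IH]; first by rewrite cards0.
by apply: leq_trans (leq_card_setU _ _) _; rewrite leq_add2l.
Qed.

Section UpperBounds.
Variables (T : finType) (s : T) (D : nat).
Variables (par : {ffun T -> T}) (n : {ffun T -> bool}) (W : {ffun T -> 'I_D}).
Hypothesis par_sink : par s = s.
Hypothesis anc_sink : forall v, anc par v s.
Hypothesis feasW : feasible s par n W.

Definition covered :=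
  [set i | (i != s) && [forall j, (anc par i j && (j != s)) ==> n j]].
Definition receiver x := (x == s) || (x \in covered).
Definition children x := [set c in covered | par c == x].
Definition descendants x := [set i in covered | (i != x) && anc par i x].

Lemma anc_refl i : anc par i i.
Proof. by apply/existsP; exists ord0. Qed.

Lemma anc_iter m i : iter m par i != s -> anc par i (iter m par i).
Proof.
move=> iterNs; have /existsP[k /eqP iter_k] := anc_sink i.
have [m_small|k_lt_m] := leqP m #|T|.
  by apply/existsP; exists (Ordinal (m_small : m < #|T|.+1)).
move: iterNs; rewrite -(subnK (ltnW (leq_trans (ltn_ord k) k_lt_m))).
by rewrite iterD iter_k iter_fix ?eqxx.
Qed.

Lemma anc_trans i j k : anc par i j -> anc par j k -> k != s -> anc par i k.
Proof.
move=> /existsP[a /eqP <-] /existsP[b /eqP <-]; rewrite -iterD.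
exact: anc_iter.
Qed.

Lemma covered_neq i : i \in covered -> i != s.
Proof. by rewrite inE => /andP[]. Qed.

Lemma covered_participates i : i \in covered -> n i.
Proof.
rewrite inE => /andP[iNs /forallP/(_ i)/implyP]; apply.
by rewrite anc_refl.
Qed.

Lemma covered_anc i j : i \in covered -> anc par i j -> j != s -> j \in covered.
Proof.
move=> i_cov ij jNs; rewrite inE jNs; apply/forallP => k.
apply/implyP => /andP[jk kNs].
move: i_cov; rewrite inE => /andP[_ /forallP/(_ k)/implyP]; apply.
by rewrite (anc_trans ij jk kNs).
Qed.

Lemma descendants_sink : descendants s = covered.
Proof.
apply/setP => i; rewrite inE anc_sink andbT.
by case: (boolP (i \in covered)) => //= /covered_neq.
Qed.

Lemma descendant_child x i :
  i \in descendants x -> exists2 c, c \in children x & i \in c |: descendants c.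
Proof.
rewrite inE => /and3P[i_cov iNx /existsP[k0 /eqP iter_k0]].
have reach_x : exists k, iter k par i == x by exists k0; apply/eqP.
case: (ex_minnP reach_x) => [[|m] /eqP iter_m min_m].
  by rewrite -iter_m eqxx in iNx.
pose c := iter m par i; have par_c : par c = x by rewrite -iter_m.
have cNs : c != s.
  apply: contraTneq (leqnn m) => c_s; rewrite -ltnNge; apply: min_m.
  by rewrite -/c c_s -par_c c_s par_sink.
have ic : anc par i c := anc_iter cNs.
exists c; first by rewrite in_set par_c eqxx (covered_anc i_cov ic cNs).
by rewrite in_setU1 in_set i_cov ic andbT orbN.
Qed.

Lemma card_descendants x :
  #|descendants x| <= \sum_(c in children x) (#|descendants c|).+1.
Proof.
have sub : descendants x \subset \bigcup_(c in children x) (c |: descendants c).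
  by apply/subsetP => i /descendant_child[c c_ch i_c]; apply/bigcupP; exists c.
apply: leq_trans (subset_leq_card sub) _.
apply: leq_trans (card_bigcup_leq _ _) _; apply: leq_sum => c _.
by rewrite cardsU1 -add1n leq_add2r leq_b1.
Qed.

Lemma Wrecv_covered c : c \in covered -> Wrecv s W c = W c.
Proof. by move/covered_neq/negbTE; rewrite /Wrecv => ->. Qed.

Lemma Wrecv_leq x : Wrecv s W x <= D.
Proof. by rewrite /Wrecv; case: (x == s) => //; apply: ltnW. Qed.

Lemma child_covered x c : c \in children x -> c \in covered.
Proof. by rewrite in_set => /andP[]. Qed.

Lemma child_par x c : c \in children x -> par c = x.
Proof. by rewrite in_set => /andP[_ /eqP]. Qed.

Lemma child_receiver x c : c \in children x -> receiver c.
Proof. by move/child_covered; rewrite /receiver => ->; rewrite orbT. Qed.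

Lemma receiver_relays x c :
  receiver x -> c \in children x ->
  (c != s) && n c && ((par c == s) || n (par c)).
Proof.
move=> x_rec c_ch; have c_cov := child_covered c_ch.
rewrite (covered_neq c_cov) (covered_participates c_cov) (child_par c_ch) /=.
by case/orP: x_rec => [->|/covered_participates ->]; rewrite ?orbT.
Qed.

Lemma wait_child_lt x c : receiver x -> c \in children x -> W c < Wrecv s W x.
Proof.
move=> x_rec c_ch; rewrite -(child_par c_ch).
by case/andP: feasW => /forallP/(_ c)/implyP-> //; rewrite (receiver_relays x_rec).
Qed.

Lemma wait_children_inj x : receiver x -> {in children x &, injective W}.
Proof.
move=> x_rec c d c_ch d_ch; apply: contra_eq => cNd.
case/andP: feasW => _ /forallP/(_ c)/forallP/(_ d)/implyP; apply.
have /andP[/andP[-> ->] rel_c] := receiver_relays x_rec c_ch.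
have /andP[/andP[-> ->] _] := receiver_relays x_rec d_ch.
by rewrite cNd rel_c (child_par c_ch) (child_par d_ch) eqxx.
Qed.

Lemma card_descendants_lt_exp2 x : receiver x -> #|descendants x| < 2 ^ Wrecv s W x.
Proof.
have [k] := ubnP (Wrecv s W x); elim: k x => // k IH x lt_xk x_rec.
have IHc c : c \in children x -> (#|descendants c|).+1 <= 2 ^ W c.
  move=> c_ch; have c_cov := child_covered c_ch.
  rewrite -(Wrecv_covered c_cov) IH ?(child_receiver c_ch) //.
  by rewrite Wrecv_covered // (leq_trans (wait_child_lt x_rec c_ch)).
have sum_Wset : \sum_(v in W @: children x) 2 ^ v <= \sum_(v < Wrecv s W x) 2 ^ v.
  rewrite (big_ord_widen _ (fun v => 2 ^ v) (Wrecv_leq x)).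
  rewrite big_mkcond [X in _ <= X]big_mkcond; apply: leq_sum => v _.
  case: ifP => // /imsetP[c c_ch ->]; by rewrite wait_child_lt.
apply: leq_ltn_trans (card_descendants x) _.
apply: leq_ltn_trans (leq_sum _ IHc) _.
rewrite -(big_imset (fun v : 'I_D => 2 ^ v) (wait_children_inj x_rec)) /=.
apply: leq_ltn_trans sum_Wset _.
by rewrite -[X in X < _]mul1n -(predn_exp 2) ltn_predL expn_gt0.
Qed.

Lemma card_descendants_chain x :
  is_chain s par -> receiver x -> #|descendants x| <= Wrecv s W x.
Proof.
move=> chain; have [k] := ubnP (Wrecv s W x); elim: k x => // k IH x lt_xk x_rec.
have IHc c : c \in children x -> (#|descendants c|).+1 <= Wrecv s W x.
  move=> c_ch; apply: leq_ltn_trans (wait_child_lt x_rec c_ch).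
  rewrite -(Wrecv_covered (child_covered c_ch)) IH ?(child_receiver c_ch) //.
  rewrite Wrecv_covered ?(child_covered c_ch) //.
  exact: leq_trans (wait_child_lt x_rec c_ch) _.
have one_child : #|children x| <= 1.
  apply/card_le1_eqP => c d c_ch d_ch.
  apply: chain; rewrite ?covered_neq ?(child_covered c_ch) ?(child_covered d_ch) //.
  by rewrite (child_par c_ch) (child_par d_ch).
apply: leq_trans (card_descendants x) _.
apply: leq_trans (leq_sum _ IHc) _.
by rewrite sum_nat_const -[leqRHS]mul1n leq_mul2r one_child orbT.
Qed.

Lemma QoA_leq_exp2 : QoA s par n <= 2 ^ D - 1.
Proof.
rewrite subn1 -ltnS prednK ?expn_gt0 //.
have := card_descendants_lt_exp2 (x := s).
by rewrite descendants_sink /Wrecv /receiver eqxx; apply.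
Qed.

Lemma QoA_chain_leq : is_chain s par -> QoA s par n <= D.
Proof.
move=> chain; have := card_descendants_chain (x := s) chain.
by rewrite descendants_sink /Wrecv /receiver eqxx; apply.
Qed.

End UpperBounds.

Section TreeQoA.
Variables (T : finType) (s : T) (D : nat).

Lemma maxQoA_leq_exp2 e par : spanning_tree s e par -> maxQoA s D par <= 2 ^ D - 1.
Proof.
case/and3P => /eqP par_sink _ /forallP anc_sink.
by apply/bigmax_leqP => -[n W] /= feasW; exact: QoA_leq_exp2 feasW.
Qed.

Lemma maxQoA_chain_leq e par :
  spanning_tree s e par -> is_chain s par -> maxQoA s D par <= D.
Proof.
case/and3P => /eqP par_sink _ /forallP anc_sink chain.
by apply/bigmax_leqP => -[n W] /= feasW; exact: QoA_chain_leq feasW chain.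
Qed.

Lemma optQoA_leq_exp2 e : optQoA s D e <= 2 ^ D - 1.
Proof. by apply/bigmax_leqP => par; apply: maxQoA_leq_exp2. Qed.

Lemma QoA_leq_maxQoA par n (W : {ffun T -> 'I_D}) :
  feasible s par n W -> QoA s par n <= maxQoA s D par.
Proof. by move=> feasW; apply: (@leq_bigmax_cond _ _ _ (n, W)). Qed.

Lemma maxQoA_leq_optQoA e par : spanning_tree s e par -> maxQoA s D par <= optQoA s D e.
Proof. by move=> tree; apply: (@leq_bigmax_cond _ _ _ par). Qed.

Lemma QoA_all_participate par : QoA s par [ffun=> true] = #|T|.-1.
Proof.
rewrite -(cardsC1 s); apply: eq_card => i; rewrite !inE.
by rewrite -[RHS]andbT; congr (_ && _); apply/forallP => j; rewrite ffunE implybT.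
Qed.

Lemma complete_graph_connected : connected_graph s (fun u v => u != v).
Proof.
split; first by move=> u v; rewrite eq_sym.
split; first by move=> u; rewrite /= eqxx.
by move=> v; case: (eqVneq s v) => [<-|sNv]; [exact: connect0 | exact: connect1].
Qed.

Lemma spanning_tree_of_rank (par : {ffun T -> T}) (rank : T -> nat) :
  (forall v, rank v <= #|T|) -> (forall v, (rank v == 0) = (v == s)) ->
  (forall v, rank (par v) = (rank v).-1) -> spanning_tree s (fun u v => u != v) par.
Proof.
move=> rank_leq rank0 rank_par.
have rank_iter k v : rank (iter k par v) = rank v - k.
  by elim: k => [|k IH]; rewrite ?subn0 //= rank_par IH subnS.
have /eqP rank_s : rank s == 0 by rewrite rank0.
apply/and3P; split.
- by rewrite -rank0 rank_par rank_s.
- apply/forallP => v; apply/implyP; rewrite -rank0 -lt0n => rank_pos.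
  apply/eqP => v_par; have := rank_par v; rewrite -v_par; lia.
- apply/forallP => v; apply/existsP; exists (Ordinal (rank_leq v : rank v < #|T|.+1)).
  by rewrite -rank0 rank_iter subnn.
Qed.

End TreeQoA.

Section Chain.
Variable D : nat.

Definition chain_par : {ffun 'I_D.+2 -> 'I_D.+2} := [ffun i : 'I_D.+2 => inord i.-1].
Definition chain_wait : {ffun 'I_D.+2 -> 'I_D.+1} :=
  [ffun i : 'I_D.+2 => inord (D.+1 - i)].

Lemma chain_par_val i : chain_par i = i.-1 :> nat.
Proof. by rewrite ffunE inordK // (leq_ltn_trans (leq_pred i)). Qed.

Lemma chain_wait_val i : i != ord0 -> chain_wait i = D.+1 - i :> nat.
Proof.
rewrite -val_eqE /= -lt0n => i_pos; rewrite ffunE inordK //.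
by have := ltn_ord i; lia.
Qed.

Lemma chain_spanning_tree : spanning_tree ord0 (fun u v => u != v) chain_par.
Proof.
apply: (@spanning_tree_of_rank _ _ _ (@nat_of_ord _)) => [v|//|v].
  by rewrite card_ord; apply: ltnW.
exact: chain_par_val.
Qed.

Lemma chain_is_chain : is_chain ord0 chain_par.
Proof.
move=> u v; rewrite -!val_eqE /= -!lt0n => u_pos v_pos /(congr1 (@nat_of_ord _)).
by rewrite !chain_par_val => uv; apply: ord_inj; lia.
Qed.

Lemma chain_feasible : feasible ord0 chain_par [ffun=> true] chain_wait.
Proof.
apply/andP; split.
- apply/forallP => j; apply/implyP => /andP[/andP[jN0 _] _]; rewrite /Wrecv.
  case: eqP => [_|/eqP pjN0]; first exact: ltn_ord.
  rewrite !chain_wait_val //; move: pjN0 jN0.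
  rewrite -!val_eqE /= chain_par_val; have := ltn_ord j; lia.
- apply/forallP => j; apply/forallP => k; apply/implyP.
  case/and5P => jN0 kN0 jNk _ /andP[_ /andP[/eqP pjk _]].
  by rewrite (chain_is_chain jN0 kN0 pjk) eqxx in jNk.
Qed.

Lemma maxQoA_chain : maxQoA ord0 D.+1 chain_par = D.+1.
Proof.
apply/eqP; rewrite eqn_leq (maxQoA_chain_leq _ chain_spanning_tree chain_is_chain).
have := QoA_leq_maxQoA chain_feasible.
by rewrite QoA_all_participate card_ord.
Qed.

End Chain.

Section BinomialTree.
Variable D : nat.
Local Notation node := {set 'I_D.+1}.

Definition setmin (A : node) : option 'I_D.+1 :=
  [pick i in A | [forall j in A, i <= j]].

Lemma setmin0 : setmin set0 = None.
Proof. by rewrite /setmin; case: pickP => // i; rewrite inE. Qed.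

Lemma setminP A :
  A != set0 -> exists i, [/\ setmin A = Some i, i \in A & forall j, j \in A -> i <= j].
Proof.
case/set0Pn => i0 i0A; rewrite /setmin.
case: pickP => [i /andP[iA /forallP min_i]|none].
  by exists i; split => // j jA; have := min_i j; rewrite jA.
have [i iA min_i] := arg_minnP (@nat_of_ord _) i0A.
move: (none i) => /negbT/nandP[/negP //|/forallPn[j]]; rewrite negb_imply => /andP[jA].
by rewrite min_i.
Qed.

Definition binom_par : {ffun node -> node} :=
  [ffun A => if setmin A is Some i then A :\ i else A].
Definition binom_wait : {ffun node -> 'I_D.+1} :=
  [ffun A => if setmin A is Some i then i else ord0].

Lemma card_binom_par A : #|binom_par A| = #|A|.-1.
Proof.
have [->|/setminP[i [min_A iA _]]] := eqVneq A set0.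
  by rewrite ffunE setmin0 cards0.
by rewrite ffunE min_A (cardsD1 i A) iA.
Qed.

Lemma card_node : #|node| = 2 ^ D.+1.
Proof. by rewrite -cardsT -powersetT card_powerset cardsT card_ord. Qed.

Lemma binom_spanning_tree : spanning_tree set0 (fun u v => u != v) binom_par.
Proof.
apply: (@spanning_tree_of_rank _ _ _ (fun A : node => #|A|)) => [A|A|A].
- rewrite card_node; apply: leq_trans (max_card A) _.
  by rewrite card_ord ltnW // ltn_expl.
- exact: cards_eq0.
- exact: card_binom_par.
Qed.

Lemma binom_feasible : feasible set0 binom_par [ffun=> true] binom_wait.
Proof.
apply/andP; split.
- apply/forallP => A; apply/implyP => /andP[/andP[AN0 _] _].
  have [i [min_A iA min_i]] := setminP AN0.
  rewrite /Wrecv; case: ifP => [_|/negbT pAN0]; first by rewrite ffunE min_A.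
  have [j [min_pA jpA _]] := setminP pAN0.
  rewrite [binom_wait A]ffunE [binom_wait _]ffunE min_A min_pA.
  move: jpA; rewrite ffunE min_A !inE => /andP[jNi jA].
  by rewrite ltn_neqAle min_i // andbT eq_sym.
- apply/forallP => A; apply/forallP => B; apply/implyP.
  case/and5P => AN0 BN0 ANB _ /andP[_ /andP[/eqP pAB _]].
  apply: contraNneq ANB => wAB.
  have [i [min_A iA _]] := setminP AN0; have [j [min_B jB _]] := setminP BN0.
  move: wAB pAB; rewrite !ffunE min_A min_B => ij; subst j => pAB.
  by apply/eqP; rewrite -(setD1K iA) -(setD1K jB) pAB.
Qed.

Lemma optQoA_binom : optQoA set0 D.+1 (fun u v : node => u != v) = 2 ^ D.+1 - 1.
Proof.
apply/eqP; rewrite eqn_leq optQoA_leq_exp2.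
apply: leq_trans (maxQoA_leq_optQoA _ binom_spanning_tree).
have := QoA_leq_maxQoA binom_feasible.
by rewrite QoA_all_participate card_node subn1.
Qed.

End BinomialTree.

Theorem theorem1 (D : nat) : 0 < D ->
  (* optimal tree: over all networks, the best tree achieves at most,
     and in some network exactly, 2^D - 1 *)
  ((forall (T : finType) (s : T) (e : rel T),
      connected_graph s e -> optQoA s D e <= 2 ^ D - 1) /\
   (exists (T : finType) (s : T) (e : rel T),
      connected_graph s e /\ optQoA s D e = 2 ^ D - 1)) /\
  (* worst-case tree (a chain rooted at the sink): at most, and for some
     network exactly, D *)
  ((forall (T : finType) (s : T) (e : rel T) (par : {ffun T -> T}),
      connected_graph s e -> spanning_tree s e par -> is_chain s par ->
      maxQoA s D par <= D) /\
   (exists (T : finType) (s : T) (e : rel T) (par : {ffun T -> T}),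
      [/\ connected_graph s e, spanning_tree s e par, is_chain s par &
          maxQoA s D par = D])).
Proof.
case: D => // D _; split; split.
- by move=> T s e _; apply: optQoA_leq_exp2.
- exists {set 'I_D.+1}, set0, (fun u v => u != v).
  by split; [exact: complete_graph_connected | exact: optQoA_binom].
- by move=> T s e par _; apply: maxQoA_chain_leq.
- exists 'I_D.+2, ord0, (fun u v => u != v), (chain_par D).
  split; [exact: complete_graph_connected | exact: chain_spanning_tree |
          exact: chain_is_chain | exact: maxQoA_chain].
Qed.
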